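(* Let $G$ be a group acting without inversions on a tree $T$, let $H$ be a tame subgroup of $G$ containing hyperbolic elements, and let $\widetilde{X}$ be the graph obtained from $X=T_{H}/H$ by attaching a loop at each $H$-non-degenerate vertex. Then $$\overline{C}_{T}(H)=\overline{r}(\widetilde{X})=\frac{1}{2}\sum\big(\deg_{\widetilde{X}}([v]_{H})-2\big),$$ where the sum is over all vertices $[v]_{H}$ of $\widetilde{X}$.
   Context: $T_H$ is the unique minimal $H$-invariant subtree of $T$; $H$ tame with a hyperbolic element means $T_H/H$ is finite. A vertex $v$ of $T_H$ is $H$-degenerate if $H_v=H_e$ for some edge $e$ of $T_H$ with initial vertex $v$; otherwise $[v]_H$ is non-degenerate. $C_T(H)=r(T_H/H)+|V_{ndeg}(T_H/H)|$ (rank of the fundamental group plus number of non-degenerate vertices; this equals $r(T/H)+|V_{ndeg}(T/H)|$), and $\overline{C}_T(H)=\max\{C_T(H)-1,0\}$. For a finite connected graph $Y$, $\overline{r}(Y)=\max\{r(Y)-1,0\}$ where $r(Y)$ is the rank of its fundamental group. $\deg_{\widetilde X}(w)$ is the number of (oriented) edges with initial vertex $w$, so an attached loop contributes $2$. *)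

From HB Require Import structures.
From mathcomp Require Import all_boot all_order all_algebra.
Set Implicit Arguments. Unset Strict Implicit. Unset Printing Implicit Defensive.
Import Order.TTheory GRing.Theory Num.Theory.
Local Open Scope ring_scope.

Record group := Group {
  gT :> Type;
  gmul : gT -> gT -> gT;
  gone : gT;
  ginv : gT -> gT }.

Definition is_group (G : group) : Prop :=
  [/\ forall x y z : G, gmul x (gmul y z) = gmul (gmul x y) z,
      forall x : G, gmul (gone G) x = x,
      forall x : G, gmul x (gone G) = x,
      forall x : G, gmul (ginv x) x = gone G
    & forall x : G, gmul x (ginv x) = gone G].

Definition is_subgroup (G : group) (H : G -> Prop) : Prop :=
  [/\ H (gone G), forall x y, H x -> H y -> H (gmul x y)
    & forall x, H x -> H (ginv x)].

(* Serre graphs: vertices, oriented edges, origin, edge reversal.      *)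
Record sgraph := SGraph {
  sV : Type;
  sE : Type;
  so : sE -> sV;
  sbar : sE -> sE }.

Definition sterm (T : sgraph) (e : sE T) : sV T := so (sbar e).

Definition is_sgraph (T : sgraph) : Prop :=
  (forall e : sE T, sbar (sbar e) = e) /\ (forall e : sE T, sbar e <> e).

Fixpoint epath (T : sgraph) (u v : sV T) (p : list (sE T)) : Prop :=
  match p with
  | nil => u = v
  | e :: p' => so e = u /\ epath (sterm e) v p'
  end.

Fixpoint reduced (T : sgraph) (p : list (sE T)) : Prop :=
  match p with
  | e1 :: ((e2 :: _) as p') => e2 <> sbar e1 /\ reduced p'
  | _ => True
  end.

Definition is_tree (T : sgraph) : Prop :=
  [/\ is_sgraph T,
      (forall u v : sV T, exists p, epath u v p)
    & (forall (u : sV T) p, p <> nil -> epath u u p -> ~ reduced p)].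

Record gaction (G : group) (T : sgraph) := GAction {
  actV : G -> sV T -> sV T;
  actE : G -> sE T -> sE T }.

Definition is_action (G : group) (T : sgraph) (a : gaction G T) : Prop :=
  (forall v, actV a (gone G) v = v) /\
  (forall e, actE a (gone G) e = e) /\
  (forall g h v, actV a (gmul g h) v = actV a g (actV a h v)) /\
  (forall g h e, actE a (gmul g h) e = actE a g (actE a h e)) /\
  (forall g e, actV a g (so e) = so (actE a g e)) /\
  (forall g e, actE a g (sbar e) = sbar (actE a g e)).

Definition without_inversions (G : group) (T : sgraph) (a : gaction G T) : Prop :=
  forall g e, actE a g e <> sbar e.

(* hyperbolic element (for an action without inversions): fixes no vertex *)
Definition hyperbolic (G : group) (T : sgraph) (a : gaction G T) (g : G) : Prop :=
  forall v, actV a g v <> v.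

Fixpoint all_prop (A : Type) (P : A -> Prop) (s : list A) : Prop :=
  match s with nil => True | x :: s' => P x /\ all_prop P s' end.

(* Subtrees, given by their vertex sets (edges: both endpoints inside). *)
Definition sub_edge (T : sgraph) (S : sV T -> Prop) (e : sE T) : Prop :=
  S (so e) /\ S (sterm e).

Definition is_subtree (T : sgraph) (S : sV T -> Prop) : Prop :=
  (exists v, S v) /\
  (forall u v, S u -> S v -> exists p, epath u v p /\ all_prop (sub_edge S) p).

Definition invariant_subtree (G : group) (T : sgraph) (a : gaction G T)
    (H : G -> Prop) (S : sV T -> Prop) : Prop :=
  is_subtree S /\ forall h v, H h -> S v -> S (actV a h v).

Definition minimal_invariant_subtree (G : group) (T : sgraph) (a : gaction G T)
    (H : G -> Prop) (S : sV T -> Prop) : Prop :=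
  invariant_subtree a H S /\
  forall S', invariant_subtree a H S' -> (forall v, S' v -> S v) ->
             forall v, S v -> S' v.

(* H-degenerate vertex of T_H = S: H_v = H_e for some edge e of S with origin v
   (H_e <= H_v always, so equality amounts to the stated equivalence). *)
Definition degenerate (G : group) (T : sgraph) (a : gaction G T)
    (H : G -> Prop) (S : sV T -> Prop) (v : sV T) : Prop :=
  exists e, sub_edge S e /\ so e = v /\
    forall h, H h -> (actV a h v = v <-> actE a h e = e).

Record fingraphT := FGraph {
  fV : finType;
  fE : finType;
  fo : fE -> fV;
  fbar : fE -> fE }.

(* rank of the fundamental group of a finite connected graph:
   #(geometric edges) - #vertices + 1 *)
Definition frank (Y : fingraphT) : rat := #|fE Y|%:R / 2 - #|fV Y|%:R + 1.
Definition frankbar (Y : fingraphT) : rat := Num.max (frank Y - 1) 0.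

Definition fdeg (Y : fingraphT) (w : fV Y) : nat := #|[set e | fo e == w]|.

(* X is (isomorphic to) the quotient graph S/H, via projections pV, pE *)
Definition is_quotient (G : group) (T : sgraph) (a : gaction G T)
    (H : G -> Prop) (S : sV T -> Prop) (X : fingraphT)
    (pV : sV T -> fV X) (pE : sE T -> fE X) : Prop :=
  (forall e, sub_edge S e -> fo (pE e) = pV (so e)) /\
  (forall e, sub_edge S e -> fbar (pE e) = pE (sbar e)) /\
  (forall x, exists v, S v /\ pV v = x) /\
  (forall y, exists e, sub_edge S e /\ pE e = y) /\
  (forall v w, S v -> S w ->
     (pV v = pV w <-> exists h, H h /\ actV a h w = v)) /\
  (forall e f, sub_edge S e -> sub_edge S f ->
     (pE e = pE f <-> exists h, H h /\ actE a h f = e)).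

Definition CT (X : fingraphT) (nd : pred (fV X)) : rat := frank X + #|nd|%:R.
Definition CTbar (X : fingraphT) (nd : pred (fV X)) : rat := Num.max (@CT X nd - 1) 0.

(* X~ : attach a loop (a pair of mutually inverse oriented edges) at every
   vertex in nd *)
Definition loopE (X : fingraphT) (nd : pred (fV X)) : finType :=
  (fE X + ({x : fV X | nd x} * bool))%type.

Definition attach_loops (X : fingraphT) (nd : pred (fV X)) : fingraphT :=
  @FGraph (fV X) (@loopE X nd)
    (fun e => match e with inl e' => fo e' | inr (x, _) => val x end)
    (fun e => match e with inl e' => inl (fbar e') | inr (x, b) => inr (x, ~~ b) end).

(* Counting edge ends gives r(Y) - 1 = 1/2 * sum_y (deg y - 2) for every finite
   graph Y.  Attaching a loop at each non-degenerate vertex adds one to the rank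
   per loop and two to the degree of that vertex, so C_T(H) = r(X~), and the
   theorem reduces to: every vertex of X~ has degree at least 2, which makes
   the truncation at 0 inactive.  Non-degenerate vertices get this from their
   loop.  If a degenerate vertex v, with H_v = H_e, had degree at most 1 in
   T_H/H, then e would be the only edge of T_H at v, and likewise at every
   vertex of the orbit Hv; since H acts without inversions the other end of e
   is not in Hv, so removing the orbit Hv, which consists of leaves, yields a
   smaller H-invariant subtree, contradicting the minimality of T_H. *)

From Stdlib Require Import Classical.
From HB Require Import structures.
From mathcomp Require Import all_boot all_order all_algebra.
From mathcomp Require Import ring.
Import Order.TTheory GRing.Theory Num.Theory.
Local Open Scope ring_scope.

Lemma sum_fdeg (Y : fingraphT) : (\sum_(x : fV Y) fdeg x)%N = #|fE Y|.
Proof.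
rewrite -sum1_card (partition_big (@fo Y) xpredT) //=.
by apply: eq_bigr => x _; rewrite /fdeg -sum1dep_card.
Qed.

Lemma frank_subr1 (Y : fingraphT) :
  frank Y - 1 = 2^-1 * \sum_(x : fV Y) ((fdeg x)%:R - 2).
Proof.
by rewrite sumrB -natr_sum sum_fdeg sumr_const /frank -mulr_natr; field.
Qed.

Lemma frankbar_fdeg_gt1 (Y : fingraphT) : (forall x : fV Y, 1 < fdeg x)%N ->
  frankbar Y = 2^-1 * \sum_(x : fV Y) ((fdeg x)%:R - 2).
Proof.
move=> deg_gt1; rewrite /frankbar frank_subr1 max_l //.
by rewrite mulr_ge0 // sumr_ge0 // => x _; rewrite subr_ge0 ler_nat.
Qed.

Lemma frank_attach_loops (X : fingraphT) (nd : pred (fV X)) :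
  frank (attach_loops nd) = frank X + #|nd|%:R.
Proof.
by rewrite /frank /= card_sum card_prod card_bool card_sig natrD natrM; field.
Qed.

Lemma CTbar_attach_loops (X : fingraphT) (nd : pred (fV X)) :
  CTbar nd = frankbar (attach_loops nd).
Proof. by rewrite /CTbar /frankbar /CT frank_attach_loops. Qed.

Lemma fdeg_attach_loops (X : fingraphT) (nd : pred (fV X)) (x : fV X) :
  @fdeg (attach_loops nd) x = (fdeg x + 2 * nd x)%N.
Proof.
rewrite /fdeg -!sum1dep_card big_sumType /=; congr (_ + _)%N.
rewrite (eq_bigl (fun p => (val p.1 == x) && xpredT p.2)); last first.
  by case=> [[y ?] ?]; rewrite andbT.
rewrite -(pair_big (fun y => val y == x) xpredT (fun _ _ => 1%N)) /=.
case: (boolP (nd x)) => [ndx | ndx].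
  by rewrite (big_pred1 (exist _ x ndx)) ?big_bool // => y; rewrite -val_eqE.
by rewrite big_pred0 // => -[y ndy] /=; apply: contraNF ndx => /eqP <-.
Qed.

Definition leaf_set {T : sgraph} (S L : sV T -> Prop) : Prop :=
  forall y f f', L y -> sub_edge S f -> sub_edge S f' ->
  so f = y -> so f' = y -> f = f'.

Section Leaves.

Set Implicit Arguments.
Unset Strict Implicit.

Variables (T : sgraph) (S L : sV T -> Prop).
Hypothesis sbarK : forall e : sE T, sbar (sbar e) = e.
Hypothesis leafL : leaf_set S L.

(* A path entering a leaf must leave it along the reversed edge, so the
   detour can be cut out. *)
Lemma epath_avoid_leaves u w p : epath u w p -> all_prop (sub_edge S) p ->
  ~ L u -> ~ L w ->
  exists q, epath u w q /\ all_prop (sub_edge (fun y => S y /\ ~ L y)) q.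
Proof.
move: {2}(size p) (leqnn (size p)) => n; elim: n u p => [|n IH] u [|f p] //=.
- by move=> _ <- _ _ _; exists nil.
- by move=> _ <- _ _ _; exists nil.
move=> sz [<- ep] [[Sof Stf] ap] Lu Lw.
case: (classic (L (sterm f))) => Ltf; last first.
  have [q [eq aq]] := IH (sterm f) p sz ep ap Ltf Lw.
  by exists (f :: q); do !split.
case: p sz ep ap => [|f2 p] sz /= ep; first by case: Lw; rewrite -ep.
case: ep => [of2 ep] [sf2 ap].
have f2E : f2 = sbar f.
  by apply: (leafL Ltf sf2) => //; rewrite /sub_edge /sterm sbarK.
move: ep; rewrite f2E /sterm sbarK => ep.
exact: (IH _ p (ltnW sz) ep ap).
Qed.

Lemma subtree_remove_leaves : is_subtree S -> (exists v, S v /\ ~ L v) ->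
  is_subtree (fun y => S y /\ ~ L y).
Proof.
move=> [_ connS] neS; split => // u w [Su Lu] [Sw Lw].
have [p [ep ap]] := connS u w Su Sw.
exact: epath_avoid_leaves ep ap Lu Lw.
Qed.

End Leaves.

Section QuotientOfSubtree.

Set Implicit Arguments.
Unset Strict Implicit.

Variables (G : group) (T : sgraph) (a : gaction G T) (H : G -> Prop).
Variables (S : sV T -> Prop) (X : fingraphT).
Variables (pV : sV T -> fV X) (pE : sE T -> fE X).
Hypothesis groupG : is_group G.
Hypothesis sbarK : forall e : sE T, sbar (sbar e) = e.
Hypothesis actionA : is_action a.
Hypothesis subgroupH : is_subgroup H.
Hypothesis quotientX : is_quotient a H S pV pE.
Hypothesis minimalS : minimal_invariant_subtree a H S.
Hypothesis no_inversions : without_inversions a.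

Lemma stab_eq_translates_eq v e h h' :
  (forall g, H g -> actV a g v = v <-> actE a g e = e) -> so e = v ->
  H h -> H h' -> so (actE a h e) = so (actE a h' e) ->
  actE a h e = actE a h' e.
Proof.
case: groupG => mulgA mul1g _ mulVg mulgV.
case: actionA => [act1V [_ [actMV [actME [act_so _]]]]].
case: subgroupH => _ HM HV.
move=> stab oev Hh Hh' ohh'.
have Hg : H (gmul (ginv h') h) by apply: HM; [apply: HV|].
have fixv : actV a (gmul (ginv h') h) v = v.
  by rewrite actMV -oev act_so ohh' -act_so -actMV mulVg act1V.
have hE : h = gmul h' (gmul (ginv h') h) by rewrite mulgA mulgV mul1g.
by rewrite {1}hE actME (proj1 (stab _ Hg) fixv).
Qed.

Lemma S_actV h v : H h -> S v -> S (actV a h v).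
Proof. by case: minimalS => -[_ invS] _; apply: invS. Qed.

Lemma sub_edge_actE h f : H h -> sub_edge S f -> sub_edge S (actE a h f).
Proof.
case: actionA => [_ [_ [_ [_ [act_so act_sbar]]]]] Hh [Sof Stf].
by split; rewrite /sterm -?act_sbar -act_so; apply: S_actV.
Qed.

Lemma pV_actV h v : H h -> S v -> pV (actV a h v) = pV v.
Proof.
case: quotientX => [_ [_ [_ [_ [quoV _]]]]] Hh Sv.
by apply/(quoV _ _ (S_actV Hh Sv) Sv); exists h.
Qed.

(* Every edge of S at a vertex of the class of v is a translate of e, and
   H_v = H_e forces translates of e with a common origin to coincide. *)
Lemma degenerate_leaf_class v : degenerate a H S v -> (fdeg (pV v) <= 1)%N ->
  leaf_set S (fun y => pV y = pV v).
Proof.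
case=> e [Se [oev stab]] deg1 y f f' pyv Sf Sf' ofy of'y.
case: quotientX => [quo_so [_ [_ [_ [_ quoE]]]]].
have translate g : sub_edge S g -> so g = y -> exists h, H h /\ actE a h e = g.
  move=> Sg ogy; apply/(quoE _ _ Sg Se); move/card_le1_eqP: deg1; apply.
    by rewrite inE (quo_so e Se) oev.
  by rewrite inE (quo_so g Sg) ogy pyv.
have [h [Hh hef]] := translate f Sf ofy.
have [h' [Hh' hef']] := translate f' Sf' of'y.
rewrite -hef -hef'; apply: (stab_eq_translates_eq stab oev Hh Hh').
by rewrite hef hef' ofy of'y.
Qed.

(* Otherwise some g in H maps [so e] to [sterm e]; then [g e] and [sbar e]
   are two edges at [sterm e], and [g e = sbar e] would be an inversion. *)
Lemma leaf_class_neighbour x e : leaf_set S (fun y => pV y = x) ->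
  sub_edge S e -> pV (so e) = x -> pV (sterm e) <> x.
Proof.
case: actionA => [_ [_ [_ [_ [act_so _]]]]].
case: quotientX => [_ [_ [_ [_ [quoV _]]]]].
move=> leaf [Soe Ste] oex tex.
have [g [Hg gte]] : exists g, H g /\ actV a g (so e) = sterm e.
  by apply/(quoV _ _ Ste Soe); rewrite tex oex.
suff : actE a g e = sbar e by exact: no_inversions.
apply: (leaf (sterm e)) => //.
- exact: sub_edge_actE.
- by split; rewrite /sterm ?sbarK.
- by rewrite -act_so.
Qed.

Lemma degenerate_fdeg_gt1 v : degenerate a H S v -> (1 < fdeg (pV v))%N.
Proof.
move=> degv; rewrite ltnNge; apply/negP => deg1.
have leaf := degenerate_leaf_class degv deg1.
case: degv => e [[Soe Ste] [oev _]].
have tev : pV (sterm e) <> pV v.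
  by apply: (leaf_class_neighbour leaf) => //; rewrite oev.
pose S' y := S y /\ pV y <> pV v.
have subtreeS' : is_subtree S'.
  case: minimalS => -[subtreeS _] _.
  by apply: (subtree_remove_leaves sbarK leaf subtreeS); exists (sterm e).
have invariantS' : invariant_subtree a H S'.
  split=> // h w Hh [Sw pw]; split; first exact: S_actV.
  by rewrite pV_actV.
have Sv : S v by rewrite -oev.
case: minimalS => _ /(_ S' invariantS' (fun w => @proj1 _ _) v Sv).
by case=> _; apply.
Qed.

End QuotientOfSubtree.

Theorem lemma3p1 (G : group) (T : sgraph) (a : gaction G T) (H : G -> Prop)
    (S : sV T -> Prop) (X : fingraphT) (pV : sV T -> fV X) (pE : sE T -> fE X)
    (nd : pred (fV X)) :
  is_group G -> is_tree T -> is_action a -> without_inversions a ->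
  is_subgroup H -> (exists h, H h /\ hyperbolic a h) ->
  minimal_invariant_subtree a H S ->
  is_quotient a H S pV pE ->
  (forall x, nd x <-> exists v, S v /\ pV v = x /\ ~ degenerate a H S v) ->
  @CTbar X nd = frankbar (@attach_loops X nd) /\
  frankbar (@attach_loops X nd) =
    2^-1 * \sum_(x : fV (@attach_loops X nd)) ((fdeg x)%:R - 2).
Proof.
(* The hyperbolic element only serves to make T_H exist with a finite
   quotient, and both are hypotheses here. *)
move=> groupG treeT actionA no_inversions subgroupH _ minimalS quotientX ndE.
have sbarK : forall e : sE T, sbar (sbar e) = e by case: treeT => -[].
have deg_gt1 x : ~~ nd x -> (1 < fdeg x)%N.
  move=> ndx; have [_ [_ [/(_ x) [v [Sv vx]] _]]] := quotientX.
  rewrite -vx; apply: (degenerate_fdeg_gt1 groupG sbarK actionA subgroupH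
    quotientX minimalS no_inversions).
  apply: NNPP => nondeg; move/negP: ndx; apply; apply/ndE; by exists v.
split; first exact: CTbar_attach_loops.
apply: frankbar_fdeg_gt1 => x; rewrite fdeg_attach_loops.
by case: (boolP (nd x)) => [_ | /deg_gt1 ?]; [exact: ltn_addl | rewrite addn0].
Qed.
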